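(* Let $\tau>0$ and $\alpha,\beta\in\mathbb R$. Define $\mathcal M_\tau(g)=\frac1\tau\int_0^\tau\sigma g(\sigma)\,d\sigma$, so that $\mathcal M_\tau(\mathrm e^{i\alpha\cdot})=\frac1\tau\int_0^\tau\sigma\mathrm e^{i\alpha\sigma}\,d\sigma$. Then: (i) $$\int_0^\tau\Big(\mathrm e^{is\alpha}+i\beta\,\mathrm e^{is\beta}\,\mathcal M_\tau(\mathrm e^{i\alpha\cdot})\Big)\,ds=\tau\varphi(i\tau\alpha)-\tau\big(\mathrm e^{i\tau\beta}-1\big)\psi(i\tau\alpha);$$ (ii) the function $$\mathcal R_2(\alpha,\beta,\tau):=\int_0^\tau\mathrm e^{is(\alpha+\beta)}\,ds-\int_0^\tau\Big(\mathrm e^{is\alpha}+i\beta\,\mathrm e^{is\beta}\,\mathcal M_\tau(\mathrm e^{i\alpha\cdot})\Big)\,ds$$ satisfies $|\mathcal R_2(\alpha,\beta,\tau)|\le C\tau^3|\beta|^2$ for an absolute constant $C$ independent of $\alpha,\beta,\tau$.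
   Context: $\varphi(z)=\frac{e^z-1}{z}$ for $z\neq0$, $\varphi(0)=1$; $\psi(z)=\frac{e^z-1-ze^z}{z^2}$ for $z\ne0$, $\psi(0)=-\frac12$. *)

From Stdlib Require Import Reals.
From Coquelicot Require Import Coquelicot.
Open Scope R_scope.

Definition cexp (z : C) : C :=
  (exp (Re z) * cos (Im z), exp (Re z) * sin (Im z)).

Definition phi (z : C) : C :=
  if Ceq_dec z 0 then RtoC 1 else ((cexp z - 1) / z)%C.

Definition psi (z : C) : C :=
  if Ceq_dec z 0 then RtoC (- / 2)
  else ((cexp z - 1 - z * cexp z) / (z * z))%C.

Definition Mtau (tau : R) (g : R -> C) : C :=
  (RtoC (/ tau) * RInt (V := C_R_CompleteNormedModule)
                        (fun sigma => (RtoC sigma * g sigma)%C) 0 tau)%C.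

Definition integrand (alpha beta tau s : R) : C :=
  (cexp (Ci * RtoC (s * alpha))
   + Ci * RtoC beta * cexp (Ci * RtoC (s * beta))
       * Mtau tau (fun sigma => cexp (Ci * RtoC (alpha * sigma))))%C.

Definition R2 (alpha beta tau : R) : C :=
  (RInt (V := C_R_CompleteNormedModule)
        (fun s => cexp (Ci * RtoC (s * (alpha + beta)))) 0 tau
   - RInt (V := C_R_CompleteNormedModule) (integrand alpha beta tau) 0 tau)%C.

From Stdlib Require Import Reals Lra.
From Coquelicot Require Import Coquelicot.
Open Scope R_scope.

(* Both integrals are elementary: on the real and imaginary parts one checks
   int_0^t e^{isa} ds = t phi(ita) and int_0^t s e^{ias} ds = -t^2 psi(ita), and
   z phi(z) = e^z - 1 turns i b t phi(itb) into e^{itb} - 1; this gives (i).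
   For (ii), with E(x) = e^{ix} - 1 - ix and M = M_t(e^{ia.}),
     R_2 = int_0^t e^{isa} E(sb) ds - E(tb) M,
   and |E(x)| <= 2 x^2 (cos x - 1 = -2 sin^2(x/2) and the mean value theorem for
   sin x - x), while |M| <= t/2. *)

Lemma cexp_Ci x : cexp (Ci * RtoC x) = (cos x, sin x).
Proof.
  unfold cexp, Ci, RtoC, Cmult; simpl.
  replace (0 * x - 1 * 0) with 0 by ring.
  replace (0 * 0 + 1 * x) with x by ring.
  rewrite exp_0; f_equal; ring.
Qed.

Lemma cexp_Ci_add x y : cexp (Ci * RtoC (x + y)) = (cexp (Ci * RtoC x) * cexp (Ci * RtoC y))%C.
Proof.
  rewrite !cexp_Ci, cos_plus, sin_plus. unfold Cmult; simpl. f_equal; ring.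
Qed.

Lemma cexp_0 : cexp 0 = 1%C.
Proof. unfold cexp, RtoC; simpl. rewrite exp_0, cos_0, sin_0. f_equal; ring. Qed.

Lemma Cmod_cos_sin x : Cmod (cos x, sin x) = 1.
Proof.
  unfold Cmod; cbn [fst snd].
  replace (cos x ^ 2 + sin x ^ 2) with 1 by (rewrite <- (sin2_cos2 x); unfold Rsqr; ring).
  apply sqrt_1.
Qed.

Lemma Ci_mul_RtoC_0 : (Ci * RtoC 0 = 0)%C.
Proof. unfold Ci, RtoC, Cmult; simpl. f_equal; ring. Qed.

Lemma Ci_mul_RtoC_neq0 x : x <> 0 -> (Ci * RtoC x <> 0)%C.
Proof. intros Hx E. apply (f_equal snd) in E. simpl in E. lra. Qed.

Lemma Cmult_phi z : (z * phi z = cexp z - 1)%C.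
Proof.
  unfold phi; destruct (Ceq_dec z 0) as [->|Hz].
  - rewrite cexp_0. ring.
  - field. exact Hz.
Qed.

Lemma phi_0 : phi 0 = 1%C.
Proof. unfold phi. destruct (Ceq_dec 0 0); congruence. Qed.

Lemma psi_0 : psi 0 = RtoC (- / 2).
Proof. unfold psi. destruct (Ceq_dec 0 0); congruence. Qed.

Lemma is_RInt_C_pair (f g : R -> R) a b lf lg :
  is_RInt f a b lf -> is_RInt g a b lg ->
  is_RInt (V := C_R_CompleteNormedModule) (fun s => (f s, g s)) a b (lf, lg).
Proof.
  exact (is_RInt_fct_extend_pair (U := R_NormedModule) (V := R_NormedModule)
           (fun s => (f s, g s)) a b lf lg).
Qed.

Lemma is_RInt_Cmult_l (f : R -> C) a b (l c : C) :
  is_RInt (V := C_R_CompleteNormedModule) f a b l ->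
  is_RInt (V := C_R_CompleteNormedModule) (fun s => (c * f s)%C) a b (c * l)%C.
Proof.
  intros Hf. destruct c as [cr ci].
  pose proof (is_RInt_fct_extend_fst (U := R_NormedModule) (V := R_NormedModule) _ _ _ _ Hf) as Hre.
  pose proof (is_RInt_fct_extend_snd (U := R_NormedModule) (V := R_NormedModule) _ _ _ _ Hf) as Him.
  apply (is_RInt_ext (fun s => (cr * fst (f s) - ci * snd (f s), cr * snd (f s) + ci * fst (f s)))).
  { intros s _. reflexivity. }
  apply is_RInt_C_pair.
  - exact (is_RInt_minus (V := R_NormedModule) _ _ _ _ _ _
             (is_RInt_scal _ _ _ cr _ Hre) (is_RInt_scal _ _ _ ci _ Him)).
  - exact (is_RInt_plus (V := R_NormedModule) _ _ _ _ _ _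
             (is_RInt_scal _ _ _ cr _ Him) (is_RInt_scal _ _ _ ci _ Hre)).
Qed.

Lemma is_RInt_antiderivative (F f : R -> R) a b l :
  (forall x, is_derive F x (f x)) -> (forall x, ex_derive f x) -> F b - F a = l ->
  is_RInt f a b l.
Proof.
  intros HF Hf <-. apply (is_RInt_derive F f); intros x _; [apply HF|].
  apply (ex_derive_continuous (K := R_AbsRing) (V := R_NormedModule)), Hf.
Qed.

(* Equalities between integrals live in the carrier of [C_R_CompleteNormedModule];
   [ring] and [field] only recognise them once retyped at [C]. *)
Ltac C_eq := match goal with |- @eq _ ?u ?v => change (@eq C u v) end.

Ltac antiderivative F :=
  apply (is_RInt_antiderivative F);
  [ intros ?; auto_derive; auto; rewrite ?Rmult_0_r, ?cos_0, ?sin_0; field; auto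
  | intros ?; auto_derive; auto
  | rewrite ?Rmult_0_l, ?Rmult_0_r, ?cos_0, ?sin_0; field; auto ].

Lemma is_RInt_cexp_Ci a t : t <> 0 ->
  is_RInt (V := C_R_CompleteNormedModule) (fun s => cexp (Ci * RtoC (s * a))) 0 t
    (RtoC t * phi (Ci * RtoC (t * a)))%C.
Proof.
  intros Ht. apply (is_RInt_ext (fun s => (cos (s * a), sin (s * a)))).
  { intros s _. symmetry. apply cexp_Ci. }
  destruct (Req_dec a 0) as [->|Ha].
  - rewrite Rmult_0_r, Ci_mul_RtoC_0, phi_0.
    replace (RtoC t * 1)%C with (t, 0) by (unfold RtoC, Cmult; simpl; f_equal; ring).
    apply is_RInt_C_pair; [antiderivative (fun s : R => s) | antiderivative (fun s : R => 0)].
  - replace (RtoC t * phi (Ci * RtoC (t * a)))%C with (sin (t * a) / a, (1 - cos (t * a)) / a).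
    + apply is_RInt_C_pair;
        [antiderivative (fun s => sin (s * a) / a) | antiderivative (fun s => - cos (s * a) / a)].
    + unfold phi. destruct (Ceq_dec _ 0) as [E|_];
        [destruct (Ci_mul_RtoC_neq0 _ (Rmult_integral_contrapositive_currified t a Ht Ha) E)|].
      rewrite cexp_Ci. unfold Cdiv, Cinv, Cminus, Cplus, Copp, Cmult, Ci, RtoC; simpl.
      f_equal; field; auto.
Qed.

Lemma is_RInt_id_cexp_Ci a t : t <> 0 ->
  is_RInt (V := C_R_CompleteNormedModule) (fun s => (RtoC s * cexp (Ci * RtoC (a * s)))%C) 0 t
    (RtoC (- (t * t)) * psi (Ci * RtoC (t * a)))%C.
Proof.
  intros Ht. apply (is_RInt_ext (fun s => (s * cos (s * a), s * sin (s * a)))).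
  { intros s _. rewrite cexp_Ci, (Rmult_comm a s). unfold RtoC, Cmult; simpl. f_equal; ring. }
  destruct (Req_dec a 0) as [->|Ha].
  - rewrite Rmult_0_r, Ci_mul_RtoC_0, psi_0.
    replace (RtoC (- (t * t)) * RtoC (- / 2))%C with (t * t / 2, 0)
      by (unfold RtoC, Cmult; simpl; f_equal; field).
    apply is_RInt_C_pair; [antiderivative (fun s => s * s / 2) | antiderivative (fun s : R => 0)].
  - replace (RtoC (- (t * t)) * psi (Ci * RtoC (t * a)))%C
      with (t * sin (t * a) / a + cos (t * a) / (a * a) - 1 / (a * a),
            - t * cos (t * a) / a + sin (t * a) / (a * a)).
    + apply is_RInt_C_pair;
        [ antiderivative (fun s => s * sin (s * a) / a + cos (s * a) / (a * a))
        | antiderivative (fun s => - s * cos (s * a) / a + sin (s * a) / (a * a)) ].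
    + unfold psi. destruct (Ceq_dec _ 0) as [E|_];
        [destruct (Ci_mul_RtoC_neq0 _ (Rmult_integral_contrapositive_currified t a Ht Ha) E)|].
      rewrite cexp_Ci. unfold Cdiv, Cinv, Cminus, Cplus, Copp, Cmult, Ci, RtoC; simpl.
      f_equal; field; auto.
Qed.

Lemma Mtau_cexp_Ci a t : t <> 0 ->
  Mtau t (fun sigma => cexp (Ci * RtoC (a * sigma))) = (- RtoC t * psi (Ci * RtoC (t * a)))%C.
Proof.
  intros Ht. unfold Mtau. rewrite (is_RInt_unique _ _ _ _ (is_RInt_id_cexp_Ci a t Ht)).
  assert (RtoC t <> 0%C) by (intros E; apply (f_equal fst) in E; simpl in E; lra).
  rewrite RtoC_inv, RtoC_opp, RtoC_mult by exact Ht. field. assumption.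
Qed.

Lemma Ci_mul_phi b t :
  (Ci * RtoC b * (RtoC t * phi (Ci * RtoC (t * b))) = cexp (Ci * RtoC (t * b)) - 1)%C.
Proof. rewrite <- Cmult_phi, RtoC_mult. ring. Qed.

Lemma is_RInt_integrand a b t : t <> 0 ->
  is_RInt (V := C_R_CompleteNormedModule) (integrand a b t) 0 t
    (RtoC t * phi (Ci * RtoC (t * a))
     + (cexp (Ci * RtoC (t * b)) - 1) * Mtau t (fun sigma => cexp (Ci * RtoC (a * sigma))))%C.
Proof.
  intros Ht. set (M := Mtau t _).
  rewrite <- Ci_mul_phi.
  apply (is_RInt_ext (fun s => cexp (Ci * RtoC (s * a)) + Ci * RtoC b * M * cexp (Ci * RtoC (s * b)))%C).
  { intros s _. unfold integrand. fold M. C_eq. ring. }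
  replace (RtoC t * phi (Ci * RtoC (t * a)) + Ci * RtoC b * (RtoC t * phi (Ci * RtoC (t * b))) * M)%C
    with (RtoC t * phi (Ci * RtoC (t * a)) + Ci * RtoC b * M * (RtoC t * phi (Ci * RtoC (t * b))))%C
    by ring.
  exact (is_RInt_plus (V := C_R_NormedModule) _ _ _ _ _ _
           (is_RInt_cexp_Ci a t Ht) (is_RInt_Cmult_l _ _ _ _ _ (is_RInt_cexp_Ci b t Ht))).
Qed.

Lemma RInt_integrand a b t : t <> 0 ->
  RInt (V := C_R_CompleteNormedModule) (integrand a b t) 0 t
  = (RtoC t * phi (Ci * RtoC (t * a))
     - RtoC t * (cexp (Ci * RtoC (t * b)) - 1) * psi (Ci * RtoC (t * a)))%C.
Proof.
  intros Ht. rewrite (is_RInt_unique _ _ _ _ (is_RInt_integrand a b t Ht)).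
  rewrite Mtau_cexp_Ci by exact Ht. C_eq. ring.
Qed.

Lemma Rabs_sub_le_of_derive (f df : R -> R) x M :
  (forall y, is_derive f y (df y)) -> (forall y, Rabs y <= Rabs x -> Rabs (df y) <= M) ->
  Rabs (f x - f 0) <= M * Rabs x.
Proof.
  intros Hf Hdf.
  destruct (MVT_gen f 0 x df) as [c [Hc ->]].
  - intros y _. apply Hf.
  - intros y _. apply continuity_pt_filterlim, (ex_derive_continuous (V := R_NormedModule)).
    eexists. apply Hf.
  - rewrite Rabs_mult, Rminus_0_r. apply Rmult_le_compat_r; [apply Rabs_pos|].
    apply Hdf. unfold Rmin, Rmax in Hc. destruct (Rle_dec 0 x); apply Rabs_le; split_Rabs; lra.
Qed.

Lemma Rabs_sin_le x : Rabs (sin x) <= Rabs x.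
Proof.
  replace (sin x) with (sin x - sin 0) by (rewrite sin_0; ring).
  rewrite <- (Rmult_1_l (Rabs x)).
  apply (Rabs_sub_le_of_derive sin cos); [intros y; auto_derive; auto; ring|].
  intros y _. apply Rabs_le, COS_bound.
Qed.

Lemma Rabs_cos_sub_1 x : Rabs (cos x - 1) = 2 * sin (x / 2) ^ 2.
Proof.
  replace x with (2 * (x / 2)) at 1 by field. rewrite cos_2a_sin.
  rewrite Rabs_left1; [ring | pose proof (pow2_ge_0 (sin (x / 2))); nra].
Qed.

Lemma Rabs_cos_sub_1_le_sqr x : Rabs (cos x - 1) <= x ^ 2 / 2.
Proof.
  rewrite Rabs_cos_sub_1.
  pose proof (Rsqr_le_abs_1 _ _ (Rabs_sin_le (x / 2))) as H. unfold Rsqr in H. nra.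
Qed.

Lemma Rabs_cos_sub_1_le x : Rabs (cos x - 1) <= Rabs x.
Proof.
  rewrite Rabs_cos_sub_1.
  pose proof (Rabs_sin_le (x / 2)) as H. pose proof (SIN_bound (x / 2)).
  rewrite Rabs_div, (Rabs_pos_eq 2) in H by lra.
  rewrite <- (pow2_abs (sin (x / 2))).
  pose proof (Rabs_pos (sin (x / 2))). assert (Rabs (sin (x / 2)) <= 1) by (apply Rabs_le; lra).
  nra.
Qed.

Lemma Rabs_sin_sub_le x : Rabs (sin x - x) <= x ^ 2.
Proof.
  replace (sin x - x) with ((sin x - x) - (sin 0 - 0)) by (rewrite sin_0; ring).
  replace (x ^ 2) with (Rabs x * Rabs x) by (rewrite <- (pow2_abs x); ring).
  apply (Rabs_sub_le_of_derive (fun u => sin u - u) (fun u => cos u - 1));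
    [intros y; auto_derive; auto; ring|].
  intros y Hy. eapply Rle_trans; [apply Rabs_cos_sub_1_le | exact Hy].
Qed.

Lemma Cmod_le_Rabs_fst_snd (z : C) : Cmod z <= Rabs (fst z) + Rabs (snd z).
Proof.
  destruct z as [u v]. unfold Cmod; cbn [fst snd].
  rewrite <- (sqrt_pow2 (Rabs u + Rabs v)) by (pose proof (Rabs_pos u); pose proof (Rabs_pos v); lra).
  apply sqrt_le_1_alt. rewrite <- (pow2_abs u), <- (pow2_abs v).
  pose proof (Rabs_pos u); pose proof (Rabs_pos v). nra.
Qed.

Lemma Cmod_cexp_Ci_sub_le x : Cmod (cexp (Ci * RtoC x) - 1 - Ci * RtoC x) <= 2 * x ^ 2.
Proof.
  replace (cexp (Ci * RtoC x) - 1 - Ci * RtoC x)%C with (cos x - 1, sin x - x)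
    by (rewrite cexp_Ci; unfold Cminus, Cplus, Copp, Cmult, Ci, RtoC; simpl; f_equal; ring).
  eapply Rle_trans; [apply Cmod_le_Rabs_fst_snd|]. cbn [fst snd].
  pose proof (Rabs_cos_sub_1_le_sqr x). pose proof (Rabs_sin_sub_le x). pose proof (pow2_ge_0 x). lra.
Qed.

Lemma Cmod_Mtau_cexp_Ci_le a t : 0 < t ->
  Cmod (Mtau t (fun sigma => cexp (Ci * RtoC (a * sigma)))) <= t / 2.
Proof.
  intros Ht. unfold Mtau.
  rewrite (is_RInt_unique _ _ _ _ (is_RInt_id_cexp_Ci a t ltac:(lra))).
  rewrite Cmod_mult, Cmod_R, Rabs_pos_eq by (left; apply Rinv_0_lt_compat, Ht).
  assert (Hint : Cmod (RtoC (- (t * t)) * psi (Ci * RtoC (t * a))) <= t * t / 2).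
  { rewrite Cmod_norm.
    refine (norm_RInt_le (V := C_R_NormedModule) _ (fun s => s) 0 t _ _ (Rlt_le _ _ Ht) _
              (is_RInt_id_cexp_Ci a t ltac:(lra)) _).
    - intros s Hs. rewrite <- Cmod_norm, Cmod_mult, cexp_Ci, Cmod_cos_sin, Cmod_R, Rabs_pos_eq; lra.
    - antiderivative (fun s : R => s * s / 2). }
  apply Rle_trans with (/ t * (t * t / 2)).
  - apply Rmult_le_compat_l; [left; apply Rinv_0_lt_compat|]; assumption.
  - right. field. lra.
Qed.

Lemma is_RInt_cexp_Ci_mul_remainder a b t : t <> 0 ->
  is_RInt (V := C_R_CompleteNormedModule)
    (fun s => cexp (Ci * RtoC (s * a)) * (cexp (Ci * RtoC (s * b)) - 1 - Ci * RtoC (s * b)))%C 0 t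
    (RtoC t * phi (Ci * RtoC (t * (a + b))) - RtoC t * phi (Ci * RtoC (t * a))
     - Ci * RtoC b * (RtoC (- (t * t)) * psi (Ci * RtoC (t * a))))%C.
Proof.
  intros Ht.
  apply (is_RInt_ext (fun s => cexp (Ci * RtoC (s * (a + b))) - cexp (Ci * RtoC (s * a))
                               - Ci * RtoC b * (RtoC s * cexp (Ci * RtoC (a * s))))%C).
  { intros s _. rewrite Rmult_plus_distr_l, cexp_Ci_add, (Rmult_comm a s), (RtoC_mult s b). C_eq. ring. }
  exact (is_RInt_minus (V := C_R_NormedModule) _ _ _ _ _ _
           (is_RInt_minus (V := C_R_NormedModule) _ _ _ _ _ _
              (is_RInt_cexp_Ci (a + b) t Ht) (is_RInt_cexp_Ci a t Ht))
           (is_RInt_Cmult_l _ _ _ _ _ (is_RInt_id_cexp_Ci a t Ht))).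
Qed.

Lemma Cmod_RInt_cexp_Ci_mul_remainder_le a b t : 0 < t ->
  Cmod (RInt (V := C_R_CompleteNormedModule)
          (fun s => cexp (Ci * RtoC (s * a)) * (cexp (Ci * RtoC (s * b)) - 1 - Ci * RtoC (s * b)))%C
          0 t)
  <= 2 * b ^ 2 * (t ^ 3 / 3).
Proof.
  intros Ht. pose proof (is_RInt_cexp_Ci_mul_remainder a b t ltac:(lra)) as HI.
  rewrite (is_RInt_unique _ _ _ _ HI), Cmod_norm.
  refine (norm_RInt_le (V := C_R_NormedModule) _ (fun s => 2 * b ^ 2 * s ^ 2) 0 t _ _
            (Rlt_le _ _ Ht) _ HI _).
  - intros s _. rewrite <- Cmod_norm, Cmod_mult, cexp_Ci, Cmod_cos_sin, Rmult_1_l.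
    replace (2 * b ^ 2 * s ^ 2) with (2 * (s * b) ^ 2) by ring. apply Cmod_cexp_Ci_sub_le.
  - antiderivative (fun s => 2 * b ^ 2 * (s ^ 3 / 3)).
Qed.

Lemma R2_decomposition a b t : t <> 0 ->
  R2 a b t
  = (RInt (V := C_R_CompleteNormedModule)
       (fun s => cexp (Ci * RtoC (s * a)) * (cexp (Ci * RtoC (s * b)) - 1 - Ci * RtoC (s * b)))%C
       0 t
     - (cexp (Ci * RtoC (t * b)) - 1 - Ci * RtoC (t * b))
       * Mtau t (fun sigma => cexp (Ci * RtoC (a * sigma))))%C.
Proof.
  intros Ht. unfold R2.
  rewrite (is_RInt_unique _ _ _ _ (is_RInt_cexp_Ci (a + b) t Ht)).
  rewrite (is_RInt_unique _ _ _ _ (is_RInt_integrand a b t Ht)).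
  rewrite (is_RInt_unique _ _ _ _ (is_RInt_cexp_Ci_mul_remainder a b t Ht)).
  rewrite Mtau_cexp_Ci by exact Ht. rewrite RtoC_opp, (RtoC_mult t t), (RtoC_mult t b). C_eq. ring.
Qed.

Lemma Cmod_R2_le a b t : 0 < t -> Cmod (R2 a b t) <= 2 * t ^ 3 * Rabs b ^ 2.
Proof.
  intros Ht. rewrite R2_decomposition by lra.
  eapply Rle_trans; [apply Cmod_triangle|]. rewrite Cmod_opp, Cmod_mult, pow2_abs.
  pose proof (Cmod_RInt_cexp_Ci_mul_remainder_le a b t Ht) as Hint.
  pose proof (Cmod_cexp_Ci_sub_le (t * b)) as HE.
  pose proof (Cmod_Mtau_cexp_Ci_le a t Ht) as HM.
  pose proof (Rmult_le_compat _ _ _ _ (Cmod_ge_0 _) (Cmod_ge_0 _) HE HM) as Hprod.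
  assert (0 <= t ^ 3 * b ^ 2) by (apply Rmult_le_pos; [apply pow_le; lra | apply pow2_ge_0]).
  nra.
Qed.

Theorem lemma2p2 :
  (forall tau alpha beta : R, 0 < tau ->
     RInt (V := C_R_CompleteNormedModule) (integrand alpha beta tau) 0 tau
     = (RtoC tau * phi (Ci * RtoC (tau * alpha))
        - RtoC tau * (cexp (Ci * RtoC (tau * beta)) - 1)
            * psi (Ci * RtoC (tau * alpha)))%C)
  /\
  (exists C0 : R, forall tau alpha beta : R, 0 < tau ->
     Cmod (R2 alpha beta tau) <= C0 * tau ^ 3 * Rabs beta ^ 2).
Proof.
  split.
  - intros tau alpha beta Htau. apply RInt_integrand. lra.
  - exists 2. intros tau alpha beta Htau. apply Cmod_R2_le, Htau.
Qed.
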